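(* Let $X$ be a finite connected rack and let $S$ be a minimal element of $\overline{\mathcal{R}(X)}$. Then $\mathcal{R}(X)$ is pure if and only if $\overline{\mathcal{R}(X)}_{\ge S}=\{T\in\overline{\mathcal{R}(X)}: T\supseteq S\}$ is pure.
   Context: A rack is a set $X$ with a binary operation $\triangleright$ such that $a\triangleright(b\triangleright c)=(a\triangleright b)\triangleright(a\triangleright c)$ for all $a,b,c$, and each map $\phi_a\colon x\mapsto a\triangleright x$ is a bijection of $X$. Subracks are subsets closed under $\triangleright$ (including $\emptyset$); $\mathcal{R}(X)$ is the lattice of subracks under inclusion and $\overline{\mathcal{R}(X)}=\mathcal{R}(X)\setminus\{X,\emptyset\}$. $\mathsf{Inn}(X)=\langle\phi_a:a\in X\rangle$, and $X$ is connected if $\mathsf{Inn}(X)$ acts transitively on $X$. A finite poset is pure if all of its maximal chains have the same length. *)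

From mathcomp Require Import all_boot all_fingroup.
Set Implicit Arguments. Unset Strict Implicit. Unset Printing Implicit Defensive.

Record rack (T : finType) := Rack {
  rop : T -> T -> T;
  rop_sd : forall a b c, rop a (rop b c) = rop (rop a b) (rop a c);
  rop_bij : forall a, bijective (rop a) }.

Definition phi (T : finType) (X : rack T) (a : T) : {perm T} :=
  perm (bij_inj (rop_bij X a)).

Definition Inn (T : finType) (X : rack T) : {set {perm T}} :=
  <<[set phi X a | a : T]>>%g.

Definition connected (T : finType) (X : rack T) : Prop :=
  forall x y : T, exists2 g, g \in Inn X & g x = y.

(* subracks (including the empty set) *)
Definition is_subrack (T : finType) (X : rack T) (S : {set T}) : bool :=
  [forall a in S, forall b in S, rop X a b \in S].

Definition subracks (T : finType) (X : rack T) : {set {set T}} :=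
  [set S | is_subrack X S].

Definition subracks_bar (T : finType) (X : rack T) : {set {set T}} :=
  subracks X :\: [set setT; set0].

Definition subracks_bar_ge (T : finType) (X : rack T) (S : {set T}) :=
  [set U in subracks_bar X | S \subset U].

(* Finite posets given as families of sets ordered by inclusion. *)
Definition is_chain (T : finType) (P C : {set {set T}}) : Prop :=
  C \subset P /\ (forall A B, A \in C -> B \in C -> (A \subset B) || (B \subset A)).

Definition maximal_chain (T : finType) (P C : {set {set T}}) : Prop :=
  is_chain P C /\ (forall C', is_chain P C' -> C \subset C' -> C' = C).

(* pure: all maximal chains have the same length (= cardinality - 1) *)
Definition pure (T : finType) (P : {set {set T}}) : Prop :=
  forall C1 C2, maximal_chain P C1 -> maximal_chain P C2 -> #|C1| = #|C2|.

Definition minimal_in (T : finType) (P : {set {set T}}) (S : {set T}) : Prop :=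
  S \in P /\ (forall U, U \in P -> U \subset S -> U = S).

From mathcomp Require Import all_boot all_fingroup.
Set Implicit Arguments. Unset Strict Implicit. Unset Printing Implicit Defensive.

(* Removing X and the empty set maps the maximal chains of R(X) through S
   bijectively onto the maximal chains of the proper part above S, shortening
   each by two; so purity of R(X) always passes to the proper part above S.
   Conversely, every maximal chain of R(X) contains some minimal proper
   subrack A. Inner automorphisms are rack automorphisms, hence permute R(X)
   and its maximal chains; by connectedness one of them moves a point of S
   into A, and then A and the image of S meet in a proper subrack, so by
   minimality they coincide. Thus every maximal chain of R(X) has the length
   of one through S. *)

Section Chains.
Variables (T : finType) (P : {set {set T}}).

Lemma chainU1 (U : {set T}) (C : {set {set T}}) :
  U \in P -> is_chain P C ->
  {in C, forall B : {set T}, (U \subset B) || (B \subset U)} -> is_chain P (U |: C).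
Proof.
move=> UP [sCP cmpC] cmpU; split; first by rewrite subUset sub1set UP.
move=> A B /setU1P [->|AC] /setU1P [->|BC]; rewrite ?subxx //; first exact: cmpU.
  by rewrite orbC; exact: cmpU.
exact: cmpC.
Qed.

Lemma maximal_chain_comparable (C : {set {set T}}) (U : {set T}) :
  maximal_chain P C -> U \in P ->
  {in C, forall B : {set T}, (U \subset B) || (B \subset U)} -> U \in C.
Proof.
move=> [chC maxC] UP cmpU.
by rewrite -(maxC _ (chainU1 UP chC cmpU) (subsetUr _ _)) setU11.
Qed.

Lemma trivial_comparable (U B : {set T}) :
  U \in [set setT; set0] -> (U \subset B) || (B \subset U).
Proof. by case/set2P => ->; rewrite ?subsetT ?sub0set ?orbT. Qed.

Lemma maximal_chain_trivial (C : {set {set T}}) :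
  setT \in P -> set0 \in P -> maximal_chain P C -> [set setT; set0] \subset C.
Proof.
move=> PT P0 maxC; apply/subsetP => U trivU.
apply: maximal_chain_comparable => //; last by move=> B _; exact: trivial_comparable.
by case/set2P: trivU => ->.
Qed.

End Chains.

Section ProperPart.
Variables (T : finType) (P : {set {set T}}).
Hypotheses (PT : setT \in P) (P0 : set0 \in P).

Local Notation trivial := [set setT; set0 : {set T}].
Local Notation Pbar := (P :\: trivial).

Lemma mem_Pbar (B : {set T}) : B \in P -> B \notin trivial -> B \in Pbar.
Proof. by move=> BP Bntriv; rewrite in_setD Bntriv. Qed.

Lemma trivial_sub : trivial \subset P.
Proof. by apply/subsetP => B /set2P [] ->. Qed.

Lemma maximal_chain_meets_proper (C : {set {set T}}) (B0 : {set T}) :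
  B0 \in Pbar -> maximal_chain P C -> exists B, (B \in C) && (B \in Pbar).
Proof.
move=> B0bar maxC; apply/existsP; apply: contraT => /existsPn noBar.
have trivC B : B \in C -> B \in trivial.
  move=> BC; have := noBar B; rewrite BC in_setD (subsetP maxC.1.1) //.
  by rewrite andbT negbK.
suff B0C : B0 \in C by have := noBar B0; rewrite B0C B0bar.
apply: maximal_chain_comparable maxC _ _; first by case/setDP: B0bar.
by move=> B /trivC /trivial_comparable; rewrite orbC.
Qed.

Lemma minimal_in_proper_of_maximal_chain (C : {set {set T}}) (A : {set T}) :
  maximal_chain P C -> minset (fun B => (B \in C) && (B \in Pbar)) A ->
  minimal_in Pbar A.
Proof.
move=> maxC /minsetP [/andP [AC Abar] minA]; have [[sCP cmpC] _] := maxC.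
split => // U Ubar UA; apply: (minA U); rewrite // Ubar andbT.
apply: maximal_chain_comparable maxC _ _; first by case/setDP: Ubar.
move=> D DC; case/orP: (cmpC _ _ AC DC) => [AD|DA].
  by rewrite (subset_trans UA AD).
have [Dtriv|Dntriv] := boolP (D \in trivial); first by rewrite orbC trivial_comparable.
by rewrite (minA D) ?DC ?UA ?mem_Pbar ?(subsetP sCP).
Qed.

Lemma maximal_chain_meets_minimal (C : {set {set T}}) (B0 : {set T}) :
  B0 \in Pbar -> maximal_chain P C -> exists2 A, A \in C & minimal_in Pbar A.
Proof.
move=> B0bar maxC; have [A minA] := ex_minset (maximal_chain_meets_proper B0bar maxC).
exists A; first by case/minsetP: minA => /andP [].
exact: minimal_in_proper_of_maximal_chain minA.
Qed.

Variable S : {set T}.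
Hypothesis minS : minimal_in Pbar S.

Local Notation Pge := [set U in Pbar | S \subset U].

Lemma mem_Pge (U : {set T}) : U \in Pge -> (U \in P) && (U \notin trivial).
Proof. by rewrite inE in_setD => /andP [/andP [-> ->]]. Qed.

Lemma chain_ge_of_chain (C : {set {set T}}) :
  is_chain P C -> S \in C -> is_chain Pge (C :\: trivial).
Proof.
move=> [sCP cmpC] SC; split; last by move=> A B /setDP [AC _] /setDP [BC _]; exact: cmpC.
apply/subsetP => B /setDP [BC Bntriv].
have Bbar : B \in Pbar by rewrite mem_Pbar ?(subsetP sCP).
rewrite inE Bbar /=; case/orP: (cmpC _ _ SC BC) => // BS.
by rewrite (minS.2 B Bbar BS) subxx.
Qed.

Lemma chain_of_chain_ge (D : {set {set T}}) :
  is_chain Pge D -> is_chain P (D :|: trivial).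
Proof.
move=> [sDPge cmpD]; split.
  rewrite subUset trivial_sub andbT; apply/subsetP => B BD.
  by case/andP: (mem_Pge (subsetP sDPge _ BD)).
move=> A B /setUP [AD|Atriv] /setUP [BD|Btriv]; first exact: cmpD.
- by rewrite orbC trivial_comparable.
- exact: trivial_comparable.
- exact: trivial_comparable.
Qed.

Lemma mem_maximal_chain_ge (D : {set {set T}}) : maximal_chain Pge D -> S \in D.
Proof.
move=> maxD; have [[sDPge _] _] := maxD.
apply: maximal_chain_comparable maxD _ _; first by rewrite inE minS.1 subxx.
by move=> B BD; have := subsetP sDPge _ BD; rewrite inE => /andP [_ ->].
Qed.

Lemma maximal_chain_ge_of_maximal (C : {set {set T}}) :
  maximal_chain P C -> S \in C -> maximal_chain Pge (C :\: trivial).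
Proof.
move=> [chC maxC] SC; split; first exact: chain_ge_of_chain.
move=> D chD sCD; apply/eqP; rewrite eqEsubset sCD andbT.
have {}maxC : D :|: trivial = C.
  apply: maxC (chain_of_chain_ge chD) _; apply/subsetP => B BC.
  have [Btriv|Bntriv] := boolP (B \in trivial); rewrite inE ?Btriv ?orbT //.
  by rewrite (subsetP sCD) //; apply/setDP.
apply/subsetP => B BD; apply/setDP; split; first by rewrite -maxC inE BD.
by case/andP: (mem_Pge (subsetP chD.1 _ BD)).
Qed.

Lemma maximal_chain_of_maximal_ge (D : {set {set T}}) :
  maximal_chain Pge D -> maximal_chain P (D :|: trivial).
Proof.
move=> maxD; have SD := mem_maximal_chain_ge maxD; have [chD {}maxD] := maxD.
split; first exact: chain_of_chain_ge.
move=> C chC sDC; apply/eqP; rewrite eqEsubset sDC andbT.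
have SC : S \in C by rewrite (subsetP sDC) // inE SD.
have {}maxD : C :\: trivial = D.
  apply: maxD (chain_ge_of_chain chC SC) _; apply/subsetP => B BD.
  rewrite in_setD (subsetP sDC) ?andbT; last by rewrite inE BD.
  by case/andP: (mem_Pge (subsetP chD.1 _ BD)).
apply/subsetP => B BC; have [Btriv|Bntriv] := boolP (B \in trivial).
  by rewrite inE Btriv orbT.
by rewrite inE -maxD; apply/orP; left; apply/setDP.
Qed.

Lemma card_maximal_chain (C : {set {set T}}) :
  maximal_chain P C -> #|C| = #|C :\: trivial| + 2.
Proof.
move=> maxC; have nT0 : setT != set0 :> {set T}.
  apply: contraTneq minS.1 => T0; rewrite in_setD !inE -subset0 -T0 subsetT.
  by rewrite orbT.
rewrite -(cardsID trivial C) addnC (setIidPr (maximal_chain_trivial PT P0 maxC)).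
by rewrite cards2 nT0.
Qed.

Lemma card_maximal_chain_ge (D : {set {set T}}) :
  maximal_chain Pge D -> #|D :|: trivial| = #|D| + 2.
Proof.
move=> maxD; rewrite card_maximal_chain; last exact: maximal_chain_of_maximal_ge.
rewrite setDUl setDv setU0; congr (_ + 2); apply/eq_card/setP/setDidPl.
apply/pred0P => B /=; apply/andP => -[BD Btriv].
by case/andP: (mem_Pge (subsetP maxD.1.1 _ BD)); rewrite Btriv.
Qed.

Lemma pure_ge_of_pure : pure P -> pure Pge.
Proof.
move=> pureP D1 D2 maxD1 maxD2.
have := pureP _ _ (maximal_chain_of_maximal_ge maxD1) (maximal_chain_of_maximal_ge maxD2).
by rewrite (card_maximal_chain_ge maxD1) (card_maximal_chain_ge maxD2) => /addIn.
Qed.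

Lemma pure_of_pure_ge :
  (forall C, maximal_chain P C ->
     exists2 C', maximal_chain P C' /\ S \in C' & #|C'| = #|C|) ->
  pure Pge -> pure P.
Proof.
move=> toS pureGe C1 C2 maxC1 maxC2.
have [C1' [maxC1' SC1'] <-] := toS _ maxC1; have [C2' [maxC2' SC2'] <-] := toS _ maxC2.
rewrite (card_maximal_chain maxC1') (card_maximal_chain maxC2'); congr (_ + 2).
by apply: pureGe; apply: maximal_chain_ge_of_maximal.
Qed.

End ProperPart.

Section PermImage.
Variable T : finType.
Implicit Types (g : {perm T}) (A B : {set T}) (P C : {set {set T}}).

Lemma imset_permK g B : (g^-1)%g @: (g @: B) = B.
Proof. by rewrite -imset_comp -[RHS]imset_id; apply: eq_imset => x; exact: permK. Qed.

Lemma imset_permVK g B : g @: ((g^-1)%g @: B) = B.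
Proof. by rewrite -{1}(invgK g) imset_permK. Qed.

Lemma subset_imset_perm g A B : (g @: A \subset g @: B) = (A \subset B).
Proof.
apply/idP/idP => [|/imsetS //]; rewrite -{2}(imset_permK g A) -{2}(imset_permK g B).
exact: imsetS.
Qed.

Lemma imset_perm_eqT g B : (g @: B == setT) = (B == setT).
Proof. by rewrite !eqEcard !subsetT card_imset //; exact: perm_inj. Qed.

Lemma imset_perm_eq0 g B : (g @: B == set0) = (B == set0).
Proof. by rewrite -!cards_eq0 card_imset //; exact: perm_inj. Qed.

Definition perm_stable g P := forall B, (g @: B \in P) = (B \in P).

Lemma perm_stableV g P : perm_stable g P -> perm_stable (g^-1)%g P.
Proof. by move=> gP B; rewrite -gP imset_permVK. Qed.

Lemma perm_stable_proper g P :
  perm_stable g P -> perm_stable g (P :\: [set setT; set0]).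
Proof. by move=> gP B; rewrite !in_setD !in_set2 imset_perm_eqT imset_perm_eq0 gP. Qed.

Lemma chain_imset g P C :
  perm_stable g P -> is_chain P C -> is_chain P [set g @: B | B : {set T} in C].
Proof.
move=> gP [sCP cmpC]; split.
  by apply/subsetP => _ /imsetP [B BC ->]; rewrite gP (subsetP sCP).
by move=> _ _ /imsetP [A AC ->] /imsetP [B BC ->]; rewrite !subset_imset_perm cmpC.
Qed.

Lemma imset_family_permK g C :
  [set (g^-1)%g @: B | B : {set T} in [set g @: B | B : {set T} in C]] = C.
Proof.
by rewrite -imset_comp -[RHS]imset_id; apply: eq_imset => B; exact: imset_permK.
Qed.

Lemma maximal_chain_imset g P C :
  perm_stable g P -> maximal_chain P C -> maximal_chain P [set g @: B | B : {set T} in C].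
Proof.
move=> gP [chC maxC]; split; first exact: chain_imset.
move=> C' chC' sgCC'; rewrite -(maxC _ (chain_imset (perm_stableV gP) chC')).
  by rewrite -{1}(invgK g) imset_family_permK.
by rewrite -{1}(imset_family_permK g C) imsetS.
Qed.

Lemma card_imset_perm_family g C : #|[set g @: B | B : {set T} in C]| = #|C|.
Proof. exact/card_imset/imset_inj/perm_inj. Qed.

Lemma minimal_in_imset g P S :
  perm_stable g P -> minimal_in P S -> minimal_in P (g @: S).
Proof.
move=> gP [SP minS]; split; first by rewrite gP.
move=> U UP UgS; rewrite -[U](imset_permVK g) (minS ((g^-1)%g @: U)) //.
  by rewrite perm_stableV.
by rewrite -(imset_permK g S) imsetS.
Qed.

End PermImage.

Section RackAutomorphisms.
Variables (T : finType) (X : rack T).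

Definition rack_aut : {set {perm T}} :=
  [set g : {perm T} | [forall a, forall b, g (rop X a b) == rop X (g a) (g b)]].

Lemma rack_autP (g : {perm T}) :
  reflect (forall a b, g (rop X a b) = rop X (g a) (g b)) (g \in rack_aut).
Proof.
rewrite inE; apply: (iffP forallP) => [gX a b|gX a]; first exact/eqP/(forallP (gX a) b).
by apply/forallP => b; rewrite gX.
Qed.

Lemma rack_aut_group_set : group_set rack_aut.
Proof.
apply/group_setP; split; first by apply/rack_autP => a b; rewrite !perm1.
by move=> g h /rack_autP gX /rack_autP hX; apply/rack_autP => a b; rewrite !permM gX hX.
Qed.

Canonical rack_aut_group := Group rack_aut_group_set.

Lemma Inn_sub_rack_aut : Inn X \subset rack_aut.
Proof.
rewrite gen_subG; apply/subsetP => _ /imsetP [a _ ->].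
by apply/rack_autP => b c; rewrite !permE rop_sd.
Qed.

Lemma setT_subrack : setT \in subracks X.
Proof. by rewrite inE; apply/forall_inP => a _; apply/forall_inP => b _; rewrite inE. Qed.

Lemma set0_subrack : set0 \in subracks X.
Proof. by rewrite inE; apply/forall_inP => a; rewrite inE. Qed.

Lemma subracksI (A B : {set T}) :
  A \in subracks X -> B \in subracks X -> A :&: B \in subracks X.
Proof.
rewrite !inE => /forall_inP subA /forall_inP subB.
apply/forall_inP => a /setIP [aA aB]; apply/forall_inP => b /setIP [bA bB].
by rewrite inE (forall_inP (subA a aA)) ?(forall_inP (subB a aB)).
Qed.

Lemma imset_subrack (g : {perm T}) (B : {set T}) :
  g \in rack_aut -> B \in subracks X -> g @: B \in subracks X.
Proof.
move=> /rack_autP gX; rewrite !inE => /forall_inP subB.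
apply/forall_inP => _ /imsetP [a aB ->]; apply/forall_inP => _ /imsetP [b bB ->].
by rewrite -gX imset_f // (forall_inP (subB a aB)).
Qed.

Lemma perm_stable_subracks (g : {perm T}) : g \in rack_aut -> perm_stable g (subracks X).
Proof.
move=> gX B; apply/idP/idP => [|/imset_subrack-> //].
by rewrite -{2}(imset_permK g B); apply: imset_subrack; rewrite groupV.
Qed.

Lemma minimal_subracks_conjugate (S A : {set T}) :
  connected X -> minimal_in (subracks_bar X) S -> minimal_in (subracks_bar X) A ->
  exists2 g, g \in rack_aut & A = g @: S.
Proof.
move=> connX minS [Abar minA].
have [x xS] : exists x, x \in S.
  by apply/set0Pn; move: minS.1; rewrite !inE negb_or => /andP [/andP [_ ->]].
have [y yA] : exists y, y \in A.
  by apply/set0Pn; move: Abar; rewrite !inE negb_or => /andP [/andP [_ ->]].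
have [g /(subsetP Inn_sub_rack_aut) gX gxy] := connX x y.
have gbarX := perm_stable_proper (perm_stable_subracks gX).
have [gSbar mingS] := minimal_in_imset gbarX minS.
exists g => //.
have AgSbar : A :&: g @: S \in subracks_bar X.
  move: Abar gSbar; rewrite !in_setD !in_set2.
  move=> /andP [/norP [AT _] Asub] /andP [_ gSsub].
  rewrite subracksI // andbT negb_or; apply/andP; split.
    by apply: contraNneq AT => AgST; rewrite eqEsubset subsetT -AgST subsetIl.
  by apply/set0Pn; exists y; rewrite inE yA -gxy imset_f.
by rewrite -(minA _ AgSbar (subsetIl _ _)) (mingS _ AgSbar (subsetIr _ _)).
Qed.

Lemma maximal_chain_through_minimal (S : {set T}) (C : {set {set T}}) :
  connected X -> minimal_in (subracks_bar X) S -> maximal_chain (subracks X) C ->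
  exists2 C', maximal_chain (subracks X) C' /\ S \in C' & #|C'| = #|C|.
Proof.
move=> connX minS maxC.
have [A AC minA] := maximal_chain_meets_minimal minS.1 maxC.
have [g gX defA] := minimal_subracks_conjugate connX minS minA.
exists [set (g^-1)%g @: B | B : {set T} in C]; last exact: card_imset_perm_family.
split; first exact/maximal_chain_imset/maxC/perm_stableV/perm_stable_subracks.
by rewrite -(imset_permK g S) -defA imset_f.
Qed.

End RackAutomorphisms.

Theorem mainTheorem6 (T : finType) (X : rack T) (S : {set T}) :
  connected X ->
  minimal_in (subracks_bar X) S ->
  (pure (subracks X) <-> pure (subracks_bar_ge X S)).
Proof.
move=> connX minS; split.
  exact (pure_ge_of_pure (setT_subrack X) (set0_subrack X) minS).
apply: (pure_of_pure_ge (setT_subrack X) (set0_subrack X) minS) => C.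
exact: maximal_chain_through_minimal.
Qed.
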